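(* (Construction of real regular cyclic sequences.) Let $a_nx^n+\dots+a_1x+a_0$ be a polynomial whose coefficients $a_0,\dots,a_n$ are all strictly positive integers, and set $$p(x)=(x+1)(a_nx^n+\dots+a_0)=b_{n+1}x^{n+1}+b_nx^n+\dots+b_1x+b_0,$$ so $b_{n+1}=a_n$, $b_k=a_k+a_{k-1}$ for $1\le k\le n$, $b_0=a_0$. Let $y$ be any real root of $p$ and $N=2\sum_k a_k$. Then it is always possible to choose a cyclic sequence of increments $(y_1,\dots,y_N)$ (indices mod $N$) taken from $\{1,y,y^2,\dots,y^{n+1}\}$ in which each $y^k$ occurs exactly $b_k$ times and any two cyclically adjacent increments are powers of $y$ whose exponents differ by exactly one; and for any such choice and any $x_0\in\mathbb{C}$, the sequence defined by $x_\ell-x_{\ell-1}=y_\ell$ ($\ell=1,\dots,N$) satisfies $x_N=x_0$ and is a real regular cyclic sequence on the cyclic graph of order $N$ with $\gamma=2(1+y^2)/(1-y)^2$. Conversely, up to replacing $(x_k)$ by $(\lambda x_k+\mu)$ ($\lambda\in\mathbb{C}\setminus\{0\},\mu\in\mathbb{C}$) and cyclic permutation, every non-constant real regular cyclic sequence with $\gamma\ne 1,2$ arises by this construction. The regular cyclic sequences with $\gamma=2$ are exactly those made up of connected (cyclic) segments of length $\ge 2$ on each of which the sequence is constant; the non-constant real regular cyclic sequences with $\gamma=1$ are exactly those equivalent under normalization to $(0,1,0,1,\dots,0,1)$.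
   Context: The cyclic graph of order $N\ge 3$ has vertices $0,1,\dots,N-1$ with $k\sim k\pm1 \pmod N$. A regular cyclic sequence is $(x_0,\dots,x_{N-1})\in\mathbb{C}^N$, with indices taken mod $N$ (so $x_N=x_0$), satisfying for every $k$ and a fixed real constant $\gamma$: $$\frac{\gamma}{2}(x_{k-1}+x_{k+1}-2x_k)^2=(x_{k-1}-x_k)^2+(x_{k+1}-x_k)^2 .$$ Normalization means replacing $x_k$ by $\lambda x_k+\mu$ with $\lambda\in\mathbb{C}\setminus\{0\}$, $\mu\in\mathbb{C}$ (this preserves the equations). A regular cyclic sequence is real if under some normalization all its terms are real. *)

(* The complex numbers are modelled by an arbitrary
   numClosedFieldType C (an algebraically closed field with conjugation,
   order on the reals and norm; algC is an instance). *)
From HB Require Import structures.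
From mathcomp Require Import all_boot all_order all_algebra.
Set Implicit Arguments. Unset Strict Implicit. Unset Printing Implicit Defensive.
Import Order.TTheory GRing.Theory Num.Theory.
Local Open Scope ring_scope.

Section Defs.
Variable C : numClosedFieldType.

(* A cyclic sequence of order N is a function 'I_N -> C; the neighbours of
   k are ord_pred k (= k-1 mod N) and ordS k (= k+1 mod N). *)
Definition regular (N : nat) (gamma : C) (x : 'I_N -> C) : Prop :=
  forall k : 'I_N,
    gamma / 2 * (x (ord_pred k) + x (ordS k) - 2 * x k) ^+ 2
    = (x (ord_pred k) - x k) ^+ 2 + (x (ordS k) - x k) ^+ 2.

Definition real_seq (N : nat) (x : 'I_N -> C) : Prop :=
  exists l m : C, l != 0 /\ forall k, (l * x k + m) \is Num.real.

Definition nonconstant (N : nat) (x : 'I_N -> C) : Prop :=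
  exists i j : 'I_N, x i != x j.

Definition pA (n : nat) (a : nat -> nat) : {poly C} :=
  \poly_(i < n.+1) (a i)%:R.
Definition pX1A (n : nat) (a : nat -> nat) : {poly C} :=
  ('X + 1) * pA n a.

(* Increments y_1, ..., y_N are encoded by exponents: y_{i+1} = y ^+ e i,
   for i : 'I_N. *)
Definition incr_ok (N n : nat) (a : nat -> nat) (e : 'I_N -> nat) : Prop :=
  [/\ forall i, (e i <= n.+1)%N,
      forall k, (k <= n.+1)%N -> (#|[set i | e i == k]|)%:R = (pX1A n a)`_k
    & forall i : 'I_N, (e i == (e (ordS i)).+1) || (e (ordS i) == (e i).+1)].

Definition cons_seq (N : nat) (y : C) (e : 'I_N -> nat) (x0 : C) : 'I_N -> C :=
  fun k => x0 + \sum_(i < N | (i < k)%N) y ^+ e i.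

Definition cons_last (N : nat) (y : C) (e : 'I_N -> nat) (x0 : C) : C :=
  x0 + \sum_(i < N) y ^+ e i.

Definition gamma_of (y : C) : C := 2 * (1 + y ^+ 2) / (1 - y) ^+ 2.

Definition rotation (N : nat) (r : 'I_N -> 'I_N) : Prop :=
  forall k, r (ordS k) = ordS (r k).

End Defs.

(* Writing u = x_(k-1) - x_k and v = x_(k+1) - x_k, regularity at vertex k
   is the "corner" equation gamma/2 (u + v)^2 = u^2 + v^2.  For gamma = 2 it
   says u v = 0 and for gamma = 1 it says u = v, which settles the last two
   parts of the theorem.  Otherwise the ratio q of two consecutive increments
   solves gamma/2 (q - 1)^2 = 1 + q^2, whose two solutions are y and 1/y, so
   the increments are, up to a common factor, powers y^(e_k) whose cyclically
   adjacent exponents differ by one.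

   Construction: when the exponent k occurs b_k times the increments add up
   to p(y) = 0, so the cumulative sums close up, and each corner with
   differences -y^s, y^(s+-1) is regular for gamma = 2 (1 + y^2)/(1 - y)^2.
   Admissible exponents are read off an explicit closed walk: climb from
   level 0 to level n+1, making a_k - 1 round trips between the levels k and
   k+1 on the way, then descend straight back to 0.
   Converse: the exponents form a closed walk with steps of size one; its
   numbers a_k of up-steps from level k (equal to its down-steps back to k)
   are positive below the top level and level k is visited a_k + a_(k-1)
   times, while the increments summing to zero makes y a root of p. *)

From HB Require Import structures.
From mathcomp Require Import all_boot all_order all_algebra ring zify.
Set Implicit Arguments. Unset Strict Implicit. Unset Printing Implicit Defensive.
Import Order.TTheory GRing.Theory Num.Theory.
Local Open Scope ring_scope.

Lemma iter_ordS N (i : 'I_N) m : val (iter m (@ordS N) i) = ((i + m) %% N)%N.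
Proof.
elim: m => [|m IH] /=; first by rewrite addn0 modn_small.
by rewrite IH -addn1 modnDml addn1 addnS.
Qed.

Lemma iter_ordS0 N (k : 'I_N.+1) : iter k (@ordS N.+1) ord0 = k.
Proof. by apply: val_inj; rewrite iter_ordS add0n modn_small. Qed.

Lemma cyclic_ind N (P : 'I_N -> Prop) (i0 : 'I_N) :
  P i0 -> (forall k, P k -> P (ordS k)) -> forall k, P k.
Proof.
move=> P0 PS k; have Piter m : P (iter m (@ordS N) i0) by elim: m => //= m /PS.
have -> : k = iter (k + N - i0) (@ordS N) i0; last exact: Piter.
apply: val_inj; rewrite iter_ordS.
have [hi hk] := (ltn_ord i0, ltn_ord k).
by rewrite (_ : (i0 + (k + N - i0) = k + N)%N) ?modnDr ?modn_small //; lia.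
Qed.

Section Regularity.
Variable C : numClosedFieldType.

Lemma two_neq0 : (2 : C) != 0. Proof. by rewrite pnatr_eq0. Qed.

Definition corner (g u v : C) : Prop := g / 2 * (u + v) ^+ 2 = u ^+ 2 + v ^+ 2.

Lemma regularE N (g : C) (x : 'I_N -> C) :
  regular g x <-> forall k, corner g (x (ord_pred k) - x k) (x (ordS k) - x k).
Proof.
have E k : x (ord_pred k) + x (ordS k) - 2 * x k
           = (x (ord_pred k) - x k) + (x (ordS k) - x k) by ring.
by rewrite /regular /corner; split=> H k; [rewrite -H E | rewrite E H].
Qed.

Lemma corner2 (u v : C) : corner 2 u v <-> u * v = 0.
Proof.
rewrite /corner divff ?two_neq0 // mul1r.
have -> : (u + v) ^+ 2 = u ^+ 2 + v ^+ 2 + 2 * (u * v) by ring.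
split=> [H|->]; last by rewrite mulr0 addr0.
have /eqP : 2 * (u * v) = 0 by apply: (addrI (u ^+ 2 + v ^+ 2)); rewrite addr0.
by rewrite mulf_eq0 (negbTE two_neq0) => /eqP.
Qed.

Lemma corner1 (u v : C) : corner 1 u v <-> u = v.
Proof.
rewrite /corner; split=> [H|->]; last by field.
have : (u - v) ^+ 2 = 0.
  have -> : (u - v) ^+ 2 = 2 * (u ^+ 2 + v ^+ 2) - (u + v) ^+ 2 by ring.
  by rewrite -H; field.
by move/eqP; rewrite expf_eq0 /= subr_eq0 => /eqP.
Qed.

(* gamma = 2: the regular sequences are those whose jumps x_(k-1) <> x_k
   (marked by c) never occur at two consecutive vertices, i.e. those made of
   constant cyclic segments of length at least 2. *)
Lemma regular2P N (x : 'I_N -> C) : regular 2 x <->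
  exists c : pred 'I_N,
    (forall k, c k -> ~~ c (ordS k)) /\
    (forall k, ~~ c (ordS k) -> x (ordS k) = x k).
Proof.
rewrite regularE; split=> [H|[c [cS cx]] k].
  exists (fun k => x k != x (ord_pred k)); split=> [k|k]; rewrite ordSK negbK.
    move=> neq; have /corner2/eqP := H k.
    by rewrite mulf_eq0 !subr_eq0 eq_sym (negbTE neq).
  by move/eqP.
apply/corner2; case ck: (c k); first by rewrite (cx k (cS k ck)) subrr mulr0.
by have := cx (ord_pred k); rewrite ord_predK ck => /(_ isT) ->; rewrite subrr mul0r.
Qed.

Lemma regular1P N (x : 'I_N -> C) :
  regular 1 x <-> forall k, x (ord_pred k) = x (ordS k).
Proof.
rewrite regularE; split=> H k; last by apply/corner1; rewrite H.
by have /corner1/(congr1 (+%R^~ (x k))) := H k; rewrite !subrK.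
Qed.

Lemma period2 N (x : 'I_N.+1 -> C) : (forall k, x (ord_pred k) = x (ordS k)) ->
  forall m, x (iter m (@ordS _) ord0) = x (iter (odd m) (@ordS _) ord0).
Proof.
move=> H; have step m : x (iter m.+2 (@ordS _) ord0) = x (iter m (@ordS _) ord0).
  by rewrite /= -H ordSK.
by elim/ltn_ind=> -[|[|m]] IH //; rewrite step IH //= negbK.
Qed.

Lemma regular1_realP N (x : 'I_N -> C) : (1 < N)%N ->
  (regular 1 x /\ real_seq x /\ nonconstant x) <->
  (~~ odd N /\ exists l m : C, l != 0 /\
     forall k : 'I_N, l * x k + m = (odd k)%:R).
Proof.
case: N x => [|N] x // hN; set x0 := x ord0; set x1 := x (ordS ord0).
have ordS0 : val (ordS (ord0 : 'I_N.+1)) = 1%N by rewrite /= modn_small //; lia.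
split=> [[/regular1P H [_ [i [j nij]]]]|[evenN [l [m [l0 H]]]]].
  have xk k : x k = if odd k then x1 else x0.
    by have := period2 H k; rewrite iter_ordS0 => ->; case: odd.
  have x01 : x0 != x1 by apply: contraNneq nij => e; rewrite !xk -e !if_same.
  split.
    have wrap : iter N.+1 (@ordS N.+1) ord0 = ord0.
      by apply: val_inj; rewrite iter_ordS modnn.
    apply/negP => oddN; move/negP: x01; apply.
    by have := period2 H N.+1; rewrite wrap oddN => /eqP.
  have x10 : x1 - x0 != 0 by rewrite subr_eq0 eq_sym.
  exists (x1 - x0)^-1, (- x0 / (x1 - x0)); split; first by rewrite invr_eq0.
  by move=> k; rewrite xk; case: odd => /=; field.
have xk k : x k = ((odd k)%:R - m) / l by rewrite -(H k) addrK mulrC mulKf.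
have oddN : odd N by move: evenN => /=; rewrite negbK.
split; [|split].
- apply/regular1P => k; rewrite !xk /= !odd_mod ?(negbTE evenN) //.
  by rewrite addnS /= oddD oddN addbT.
- by exists l, m; split=> // k; rewrite H; case: odd.
- exists ord0, (ordS ord0); rewrite !xk ordS0 /=.
  apply: contraTneq isT => /(congr1 ( *%R^~ l)); rewrite !divfK // => /addIr/eqP.
  by rewrite eq_sym oner_eq0.
Qed.
End Regularity.

Definition adjacent (u v : nat) : bool := (u == v.+1) || (v == u.+1).

Lemma sum_by_value (V : nmodType) N M (e : 'I_N -> nat) (F : nat -> V) :
  (forall i, e i < M)%N ->
  \sum_(i < N) F (e i) = \sum_(k < M) F k *+ #|[set i | e i == k]|.
Proof.
move=> eM; rewrite (partition_big (fun i => Ordinal (eM i)) predT) //=.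
apply: eq_bigr => k _; rewrite (eq_bigr (fun _ => F k)) => [|i /eqP <- //].
rewrite sumr_const; congr (_ *+ _); apply: eq_card => i.
by rewrite !inE.
Qed.

Definition acoef (n : nat) (a : nat -> nat) (k : nat) : nat :=
  if (k < n.+1)%N then a k else 0.
Definition bcoef (n : nat) (a : nat -> nat) (k : nat) : nat :=
  acoef n a k + (if k is k'.+1 then acoef n a k' else 0).

Lemma sum_bcoef n a : (\sum_(k < n.+2) bcoef n a k = 2 * \sum_(k < n.+1) a k)%N.
Proof.
rewrite big_split /= big_ord_recr /= [X in (_ + X)%N]big_ord_recl /=.
rewrite {2}/acoef ltnn addn0 add0n mul2n -addnn.
by congr (_ + _); apply: eq_bigr => k _; rewrite /acoef ltn_ord.
Qed.

Section Polynomial.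
Variable C : numClosedFieldType.

Lemma coef_pX1A n a k : (pX1A C n a)`_k = (bcoef n a k)%:R.
Proof.
rewrite /pX1A mulrDl mul1r coefD coefXM /pA !coef_poly /bcoef /acoef natrD addrC.
by case: k => [|k] //=; rewrite !(fun_if (GRing.natmul 1)).
Qed.

Lemma incr_ok_intro N n a (e : 'I_N -> nat) :
  (forall i, e i <= n.+1)%N ->
  (forall k, k <= n.+1 -> #|[set i | e i == k]| = bcoef n a k)%N ->
  (forall i, adjacent (e i) (e (ordS i))) -> incr_ok C n a e.
Proof. by move=> le cnt adj; split=> // k /cnt ->; rewrite coef_pX1A. Qed.

Lemma sum_pow_incr N n a (e : 'I_N -> nat) (y : C) : incr_ok C n a e ->
  \sum_(i < N) y ^+ e i = (pX1A C n a).[y].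
Proof.
case=> le cnt _; rewrite (@sum_by_value _ _ n.+2) => [|i]; last by rewrite ltnS.
have sz : (size (pX1A C n a) <= n.+2)%N.
  rewrite /pX1A (leq_trans (size_polyMleq _ _)) // size_XaddC.
  by have := size_poly n.+1 (fun i => (a i)%:R : C); rewrite /pA (_ : 2%R = 2%N) //; lia.
rewrite (horner_coef_wide _ sz); apply: eq_bigr => k _.
by rewrite -cnt 1?mulr_natl // -ltnS.
Qed.

(* p(1) = 2 A(1) > 0, so 1 is not a root of p. *)
Lemma root_pX1A_neq1 n a (y : C) : (forall k, k <= n -> 0 < a k)%N ->
  root (pX1A C n a) y -> y != 1.
Proof.
move=> apos /rootP py; apply: contra_eq_neq py => ->.
rewrite /pX1A /pA hornerM hornerD hornerX hornerC horner_poly mulf_eq0 negb_or.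
rewrite (pnatr_eq0 C 2) /=; under eq_bigr do rewrite expr1n mulr1.
by rewrite -natr_sum pnatr_eq0 -lt0n big_ord_recl addn_gt0 apos.
Qed.
End Polynomial.

Section Construction.
Variable C : numClosedFieldType.

Lemma sum_prefixS N (F : 'I_N -> C) (k : 'I_N) :
  \sum_(i < N | (i < k.+1)%N) F i = \sum_(i < N | (i < k)%N) F i + F k.
Proof.
rewrite (bigD1 k) ?ltnSn //= addrC; congr (_ + _); apply: eq_bigl => i.
by rewrite ltnS -val_eqE /= andbC -ltn_neqAle.
Qed.

Lemma cons_seq_incr N (y : C) (e : 'I_N -> nat) (x0 : C) (k : 'I_N) :
  \sum_(i < N) y ^+ e i = 0 ->
  cons_seq y e x0 (ordS k) - cons_seq y e x0 k = y ^+ e k.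
Proof.
move=> sum0; rewrite /cons_seq /= (addrC x0) addrKA.
have [kN|Nk] := ltnP k.+1 N; first by rewrite modn_small // sum_prefixS addrAC subrr add0r.
have -> : k.+1 = N by have := ltn_ord k; lia.
rewrite modnn big_pred0 // sub0r.
have : \sum_(i < N | (i < k.+1)%N) y ^+ e i = 0.
  by rewrite -[RHS]sum0; apply: eq_bigl => i; rewrite (leq_trans (ltn_ord i)) //; lia.
by rewrite sum_prefixS => /eqP; rewrite addr_eq0 => /eqP ->; rewrite opprK.
Qed.

Lemma eq_from_incr N (f g : 'I_N -> C) (i0 : 'I_N) : f i0 = g i0 ->
  (forall k, f (ordS k) - f k = g (ordS k) - g k) -> forall k, f k = g k.
Proof.
by move=> fg0 dfg; apply: cyclic_ind fg0 _ => k fgk; move: (dfg k); rewrite fgk => /addIr.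
Qed.

Lemma corner_gamma_of (y : C) (s t : nat) : y != 1 -> adjacent s t ->
  corner (gamma_of y) (- y ^+ s) (y ^+ t).
Proof.
move=> y1; have y1' : 1 - y != 0 by rewrite subr_eq0 eq_sym.
rewrite /corner /gamma_of.
by case/orP => /eqP ->; [rewrite (exprSr y t) | rewrite (exprSr y s)]; field.
Qed.

Lemma construction_regular n a (y : C) N (e : 'I_N -> nat) (x0 : C) :
  (forall k, k <= n -> 0 < a k)%N -> y \is Num.real ->
  root (pX1A C n a) y -> incr_ok C n a e ->
  [/\ cons_last y e x0 = x0, regular (gamma_of y) (cons_seq y e x0)
    & real_seq (cons_seq y e x0)].
Proof.
move=> apos yreal py eok; have y1 := root_pX1A_neq1 apos py.
have sum0 : \sum_(i < N) y ^+ e i = 0 by rewrite (sum_pow_incr _ eok); apply/rootP.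
split; first by rewrite /cons_last sum0 addr0.
  apply/regularE => k; have incr i := cons_seq_incr x0 i sum0.
  have := incr (ord_pred k); rewrite ord_predK => incr_pred.
  rewrite -opprB incr_pred incr; apply: corner_gamma_of => //.
  by case: eok => _ _ /(_ (ord_pred k)); rewrite ord_predK.
exists 1, (- x0); split=> [|k]; first exact: oner_neq0.
by rewrite mul1r /cons_seq addrC addKr rpred_sum // => i _; apply: rpredX.
Qed.
End Construction.

Lemma path_cyclic_nth (T : Type) (r : rel T) (x0 : T) (s : seq T) :
  path r x0 s -> last x0 s = x0 ->
  forall i : 'I_(size s), r (nth x0 s i) (nth x0 s (ordS i)).
Proof.
move=> /(pathP x0) rs lst i; have iS := ltn_ord i; rewrite /=.
have [iS1|] := ltnP i.+1 (size s).
  by rewrite modn_small //; apply: (rs i.+1).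
move=> iS2; have -> : i.+1 = size s by lia.
rewrite modnn (_ : nth x0 s i = last x0 s); last by rewrite -nth_last; congr nth; lia.
by rewrite lst; apply: (rs 0%N); lia.
Qed.

Lemma card_nth (T : eqType) (x0 : T) (s : seq T) (j : T) :
  #|[set i : 'I_(size s) | nth x0 s i == j]| = count_mem j s.
Proof. by rewrite -sum1_count (big_nth x0) big_mkord sum1dep_card. Qed.

Definition bounce (k m : nat) : seq nat := flatten (nseq m [:: k.+1; k]).

Fixpoint ascent (a : nat -> nat) (n : nat) : seq nat :=
  if n is n'.+1 then ascent a n' ++ bounce n (a n).-1 ++ [:: n.+1]
  else bounce 0 (a 0).-1 ++ [:: 1%N].

Fixpoint descent (n : nat) : seq nat :=
  if n is n'.+1 then n :: descent n' else [:: 0%N].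

Definition word (a : nat -> nat) (n : nat) : seq nat := ascent a n ++ descent n.

Lemma bounce_path k m : path adjacent k (bounce k m) && (last k (bounce k m) == k).
Proof. by elim: m => //= m IH; rewrite /adjacent !eqxx orbT. Qed.

Lemma ascent_path a n : path adjacent 0 (ascent a n) && (last 0 (ascent a n) == n.+1).
Proof.
elim: n => [|m IH] /=.
  by have /andP [bp /eqP bl] := bounce_path 0 (a 0).-1; rewrite cat_path last_cat bp bl.
have /andP [ap /eqP al] := IH; have /andP [bp /eqP bl] := bounce_path m.+1 (a m.+1).-1.
by rewrite !cat_path !last_cat ap al bp bl /= /adjacent !eqxx !orbT.
Qed.

Lemma descent_path n : path adjacent n.+1 (descent n) && (last n.+1 (descent n) == 0%N).
Proof. by elim: n => [|n IH] //=; rewrite /adjacent eqxx. Qed.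

Lemma word_path a n : path adjacent 0 (word a n) && (last 0 (word a n) == 0%N).
Proof.
have /andP [ap /eqP al] := ascent_path a n; have /andP [dp dl] := descent_path n.
by rewrite cat_path last_cat ap al dp dl.
Qed.

Lemma count_bounce j k m :
  count_mem j (bounce k m) = (m * ((k.+1 == j) + (k == j)))%N.
Proof. by elim: m => //= m ->; rewrite mulSn !addnA. Qed.

Lemma bcoefS n a j : bcoef n.+1 a j =
  (bcoef n a j + (if j == n.+1 then a n.+1 else 0)
   + (if j == n.+2 then a n.+1 else 0))%N.
Proof.
rewrite /bcoef /acoef; case: j => [|j] /=; first by rewrite !addn0.
rewrite !ltnS !eqSS; case: (ltngtP j n) => [jn|nj|->].
- have [-> ->] : (j <= n.+1)%N /\ (j == n.+1) = false by split; lia.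
  by rewrite addn0 addn0.
- case: eqP => [->|jn1]; first by rewrite leqnn.
  by have -> : (j <= n.+1)%N = false by lia.
- by rewrite leqnSn ltn_eqF // addn0 add0n addnC.
Qed.

(* The ascent visits each level k <= n once less than b_k times; the missing
   visit is made by the descent. *)
Lemma count_ascent n a j : (forall k, k <= n -> 0 < a k)%N ->
  (count_mem j (ascent a n) + (j <= n) = bcoef n a j)%N.
Proof.
elim: n => [|n IH] apos /=.
  rewrite count_cat count_bounce /bcoef /acoef /=.
  by case: j => [|[|j]] /=; move: (apos 0%N (leqnn 0)); case: (a 0) => // a0 _; lia.
rewrite !count_cat count_bounce bcoefS -IH => [|k kn]; last exact/apos/leqW.
move: (apos n.+1 (leqnn _)); case: (a n.+1) => // b _ /=.
by rewrite addn0 !(eq_sym j); do 2 case: eqP; lia.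
Qed.

Lemma count_descent n j : count_mem j (descent n) = (j <= n)%N.
Proof. by elim: n => [|n IH] /=; rewrite ?IH eq_sym; case: ltngtP; lia. Qed.

Lemma size_bounce k m : size (bounce k m) = (2 * m)%N.
Proof. by elim: m => //= m ->; lia. Qed.

Lemma size_word n a : (forall k, k <= n -> 0 < a k)%N ->
  size (word a n) = (2 * \sum_(k < n.+1) a k)%N.
Proof.
rewrite /word size_cat (_ : size (descent n) = n.+1); last by elim: n {a} => //= n ->.
elim: n => [|n IH] apos /=.
  rewrite size_cat size_bounce big_ord1 /=.
  by move: (apos 0%N (leqnn 0)); case: (a 0) => // a0 _; lia.
rewrite !size_cat size_bounce big_ord_recr /=.
have := IH (fun k kn => apos k (leqW kn)); move: (apos n.+1 (leqnn _)).
by case: (a n.+1) => // b _ /=; lia.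
Qed.

Lemma bcoef_gt n a j : (n.+1 < j)%N -> bcoef n a j = 0%N.
Proof.
rewrite /bcoef /acoef; case: j => //= j nj.
by have [-> ->] : (j.+1 < n.+1)%N = false /\ (j < n.+1)%N = false by split; lia.
Qed.

Section Existence.
Variable C : numClosedFieldType.

Lemma exists_incr_ok n a : (forall k, k <= n -> 0 < a k)%N ->
  exists e : 'I_(2 * \sum_(k < n.+1) a k) -> nat, incr_ok C n a e.
Proof.
move=> apos; rewrite -size_word //; set w := word a n.
have cnt j : #|[set i : 'I_(size w) | nth 0%N w i == j]| = bcoef n a j.
  by rewrite card_nth count_cat count_descent count_ascent.
exists (fun i => nth 0%N w i); apply: incr_ok_intro => [i|k _|i].
- rewrite leqNgt; apply/negP => /(bcoef_gt a); rewrite -cnt => /card0_eq/(_ i).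
  by rewrite inE eqxx.
- exact: cnt.
- by have /andP [wp /eqP wl] := word_path a n; apply: path_cyclic_nth.
Qed.
End Existence.

Lemma card_sum N (P : pred 'I_N) : #|[set i | P i]| = (\sum_(i < N) P i)%N.
Proof. by rewrite -sum1dep_card big_mkcond /=; apply: eq_bigr => i _; case: (P i). Qed.

Section CyclicWalk.
Variables (N : nat) (e : 'I_N -> nat) (i0 imax : 'I_N).
Hypothesis e_adj : forall i, adjacent (e i) (e (ordS i)).
Hypothesis e_i0 : e i0 = 0%N.
Hypothesis e_imax : forall i, (e i <= e imax)%N.

Definition upsteps (k : nat) : nat := #|[set i | (e i == k) && (e (ordS i) == k.+1)]|.

Lemma downsteps k :
  #|[set i | (e i == k.+1) && (e (ordS i) == k)]| = upsteps k.
Proof.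
have below_rot : (\sum_(i < N) (e (ordS i) <= k) = \sum_(i < N) (e i <= k))%N.
  by rewrite [RHS](reindex_inj (@ordS_inj _)).
rewrite /upsteps !card_sum; apply: (@addnI (\sum_(i < N) (e i <= k))%N).
rewrite -{2}below_rot -!big_split /=; apply: eq_bigr => i _.
by have := e_adj i; rewrite /adjacent; lia.
Qed.

(* Each visit of level k is followed by a step up from k or down from k. *)
Lemma card_level k :
  #|[set i | e i == k]| = (upsteps k + (if k is k'.+1 then upsteps k' else 0))%N.
Proof.
case: k => [|k]; rewrite ?addn0 -?(downsteps k) /upsteps !card_sum -?big_split /=;
  by apply: eq_bigr => i _; have := e_adj i; rewrite /adjacent; lia.
Qed.

Lemma upsteps_top : upsteps (e imax) = 0%N.
Proof.
by apply: eq_card0 => i; rewrite !inE; have := e_imax (ordS i); lia.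
Qed.

Lemma upsteps_pos k : (k < e imax)%N -> (0 < upsteps k)%N.
Proof.
rewrite lt0n => klt; apply: contraTneq klt => /card0_eq noup; rewrite -leqNgt.
suff: forall i, (e i <= k)%N by apply.
apply: (cyclic_ind (i0 := i0)) => [|i eik]; first by rewrite e_i0.
have := noup i; rewrite inE => /negbT; have := e_adj i; rewrite /adjacent; lia.
Qed.

Lemma top_pos : (0 < e imax)%N.
Proof. by have := e_imax (ordS i0); have := e_adj i0; rewrite e_i0 /adjacent; lia. Qed.

Lemma card_level_bcoef k : (k <= e imax)%N ->
  #|[set i | e i == k]| = bcoef (e imax).-1 upsteps k.
Proof.
move=> kle; rewrite card_level /bcoef /acoef prednK ?top_pos //.
case: k kle => [|k] kle /=; first by rewrite top_pos.
rewrite kle; case: (ltnP k.+1 (e imax)) => // ge.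
have <- : e imax = k.+1 by lia.
by rewrite upsteps_top.
Qed.
End CyclicWalk.

Lemma walk_admissible (C : numClosedFieldType) N (e : 'I_N -> nat) :
  (forall i, adjacent (e i) (e (ordS i))) -> (exists i0, e i0 = 0%N) ->
  exists n a, [/\ forall k, (k <= n -> 0 < a k)%N,
                  N = (2 * \sum_(k < n.+1) a k)%N & incr_ok C n a e].
Proof.
move=> adj [i0 e0]; have [imax _ top_imax] := @arg_maxnP _ i0 predT e isT.
have emax i : (e i <= e imax)%N := top_imax i isT.
have top := top_pos adj e0 emax; have cnt := card_level_bcoef adj e0 emax.
exists (e imax).-1, (upsteps e); split=> [k kn||].
- by apply: (upsteps_pos adj e0 (imax := imax)); lia.
- rewrite -sum_bcoef prednK //.
  transitivity (\sum_(i < N) (fun=> 1%N) (e i))%N; first by rewrite sum1_card card_ord.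
  rewrite (@sum_by_value _ _ (e imax).+1 e (fun=> 1%N)); last by move=> i; rewrite ltnS emax.
  by apply: eq_bigr => k _; rewrite natn cnt // -ltnS.
- by apply: incr_ok_intro => // [i|k]; rewrite prednK // => /cnt.
Qed.

Section Ratios.
Variable C : numClosedFieldType.

(* The ratio q of two consecutive increments of a regular sequence solves
   gamma/2 (q - 1)^2 = 1 + q^2. *)
Definition char_eq (g q : C) : Prop := g / 2 * (q - 1) ^+ 2 = 1 + q ^+ 2.

Lemma corner_ratio (g D E : C) : D != 0 -> corner g (- D) E -> char_eq g (E / D).
Proof.
move=> D0; rewrite /corner /char_eq => h.
have -> : g / 2 * (E / D - 1) ^+ 2 = g / 2 * (- D + E) ^+ 2 / D ^+ 2 by field.
by rewrite h; field.
Qed.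

(* gamma/2 - 1 is the leading coefficient of char_eq up to sign. *)
Lemma half_sub1_neq0 (g : C) : g != 2 -> g / 2 - 1 != 0.
Proof.
by apply: contra => /eqP h; rewrite -[g](@divfK _ 2) ?two_neq0 // (subr0_eq h) mul1r.
Qed.

Lemma corner_zero (g E : C) : g != 2 -> corner g 0 E -> E = 0.
Proof.
rewrite /corner add0r expr0n /= add0r => g2 h.
have /eqP : (g / 2 - 1) * E ^+ 2 = 0 by rewrite mulrBl mul1r h subrr.
by rewrite mulf_eq0 (negbTE (half_sub1_neq0 g2)) expf_eq0 /= => /eqP.
Qed.

Lemma char_eq_roots (g q y : C) : g != 2 -> char_eq g q -> char_eq g y ->
  q = y \/ q * y = 1.
Proof.
move=> g2 hq hy; have : (g / 2 - 1) * ((q - y) * (q * y - 1)) =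
  y * (g / 2 * (q - 1) ^+ 2 - (1 + q ^+ 2)) - q * (g / 2 * (y - 1) ^+ 2 - (1 + y ^+ 2)).
  by ring.
rewrite hq hy !subrr !mulr0 subrr => /eqP.
rewrite !mulf_eq0 (negbTE (half_sub1_neq0 g2)) /= !subr_eq0.
by case/orP => /eqP; [left|right].
Qed.

Lemma char_eq_props (g y : C) : g != 1 -> g != 2 -> char_eq g y ->
  [/\ y != 0, y ^+ 2 != 1 & g = gamma_of y].
Proof.
rewrite /char_eq => g1 g2 hy; have two0 := @two_neq0 C.
have y1 : y != 1.
  apply: contra_neq two0 => y1; move: hy; rewrite y1 subrr expr0n /= mulr0 expr1n.
  by move=> ->; ring.
split.
- apply: contra_neq g2 => y0; move: hy; rewrite y0 => h.
  have -> : g = g / 2 * (0 - 1) ^+ 2 * 2 by field.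
  by rewrite h; ring.
- rewrite sqrf_eq1 negb_or y1 /=; apply: contra_neq g1 => ym1; move: hy; rewrite ym1 => h.
  have : 2 * (g - 1) = g / 2 * (-1 - 1) ^+ 2 - (1 + (-1) ^+ 2) by field.
  by rewrite h subrr => /eqP; rewrite mulf_eq0 (negbTE two0) subr_eq0 => /eqP.
- have y1' : 1 - y != 0 by rewrite subr_eq0 eq_sym.
  by rewrite /gamma_of -hy; field.
Qed.

Lemma powz_inj (y : C) (s t : int) : y \is Num.real -> y != 0 -> y ^+ 2 != 1 ->
  y ^ s = y ^ t -> s = t.
Proof.
move=> yreal y0 y2 eq_st; apply/eqP; rewrite -subr_eq0; apply/negP => /negP st0.
have pow1 m : y ^+ m.+1 != 1.
  apply: contra y2 => /eqP ym; have /eqP : `|y| ^+ m.+1 = 1 by rewrite -normrX ym normr1.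
  by rewrite pexprn_eq1 ?normr_ge0 // -real_normK // => /eqP ->; rewrite expr1n.
have : y ^ (s - t) = 1 by rewrite expfzDr // eq_st -expfzDr // subrr.
case: (s - t) st0 => [[|m]|m] // _ /eqP; first exact/negP/pow1.
by rewrite -[y ^ Negz m]/((y ^+ m.+1)^-1) invr_eq1; apply/negP/pow1.
Qed.
End Ratios.

Section Exponents.
Variable C : numClosedFieldType.

Lemma geometric_exponents N (d : 'I_N.+1 -> C) (y : C) :
  y \is Num.real -> y != 0 -> y ^+ 2 != 1 -> (forall k, d k != 0) ->
  (forall k, d (ordS k) = d k * y \/ d (ordS k) * y = d k) ->
  exists (l : C) (e : 'I_N.+1 -> nat),
    [/\ l != 0, forall k, l * d k = y ^+ e k,
        forall k, adjacent (e k) (e (ordS k)) & exists i0, e i0 = 0%N].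
Proof.
move=> yreal y0 y2 dnz step; have d0 := dnz ord0.
have powS t : y ^ (t + 1) = y ^ t * y by rewrite expfzDr // expr1z.
have powP t : y ^ (t - 1) * y = y ^ t by rewrite -powS subrK.
have zP k : exists t : int, d k == d ord0 * y ^ t.
  move: k; apply: (@cyclic_ind _ _ ord0) => [|k [t /eqP dk]].
    by exists 0; rewrite mulr1.
  case: (step k) => dS; [exists (t + 1) | exists (t - 1)]; apply/eqP.
    by rewrite dS dk powS mulrA.
  by apply: (mulIf y0); rewrite dS dk -mulrA powP.
pose z k := xchoose (zP k).
have dz k : d k = d ord0 * y ^ z k by exact/eqP/(xchooseP (zP k)).
have zS k : z (ordS k) = z k + 1 \/ z (ordS k) = z k - 1.
  case: (step k) => dS; [left | right]; apply: (powz_inj yreal y0 y2); apply: (mulfI d0).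
    by rewrite -dz dS dz powS mulrA.
  by apply: (mulIf y0); rewrite -dz dS dz -mulrA powP.
have [imin _ zmin] := @arg_minP _ _ _ ord0 predT z isT.
pose e k := absz (z k - z imin).
have ez k : (e k)%:Z = z k - z imin by rewrite gez0_abs // subr_ge0; apply: zmin.
exists (d ord0 * y ^ z imin)^-1, e; split.
- by rewrite invr_eq0 mulf_neq0 // expfz_neq0.
- move=> k; have := dz k; rewrite -[z k](subrK (z imin)) -ez expfzDr // => ->.
  by rewrite (mulrC (y ^ _)) (mulrA (d ord0)) mulKf // mulf_neq0 ?expfz_neq0.
- by move=> k; have := ez k; have := ez (ordS k); rewrite /adjacent; case: (zS k); lia.
- by exists imin; rewrite /e subrr.
Qed.
End Exponents.

Section Converse.
Variable C : numClosedFieldType.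

Definition incr N (x : 'I_N -> C) (k : 'I_N) : C := x (ordS k) - x k.

Lemma regular_ratios N (g : C) (x : 'I_N.+1 -> C) :
  g != 1 -> g != 2 -> regular g x -> real_seq x -> nonconstant x ->
  exists y, [/\ y \is Num.real, char_eq g y, forall k, incr x k != 0 &
    forall k, incr x (ordS k) = incr x k * y \/ incr x (ordS k) * y = incr x k].
Proof.
move=> g1 g2 /regularE reg [l0 [m0 [l00 xreal]]] [i [j xij]].
have cornerx k : corner g (- incr x (ord_pred k)) (incr x k).
  by rewrite /incr ord_predK opprB; apply: reg.
have dnz k : incr x k != 0.
  apply: contraNneq xij => dk0; have incr0 : forall h, incr x h = 0.
    apply: (@cyclic_ind _ _ k) => // h dh; apply: (corner_zero g2).
    by have := cornerx (ordS h); rewrite ordSK dh oppr0.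
  have xi h : x h = x i.
    by apply: (@eq_from_incr _ _ x (fun=> x i) i) => // h'; rewrite subrr -(incr0 h').
  by rewrite !xi.
have ratio k : char_eq g (incr x k / incr x (ord_pred k)).
  exact: corner_ratio (dnz _) (cornerx k).
have := ratio (ordS ord0); rewrite ordSK; set y := _ / _ => chy.
have lincr k : l0 * incr x k \is Num.real.
  have -> : l0 * incr x k = (l0 * x (ordS k) + m0) - (l0 * x k + m0).
    by rewrite /incr; ring.
  exact: rpredB.
exists y; split => // [|k].
  have -> : y = (l0 * incr x (ordS ord0)) / (l0 * incr x ord0).
    by rewrite /y invfM mulrACA mulfV ?mul1r.
  exact: rpred_div.
have := char_eq_roots g2 (ratio (ordS k)) chy; rewrite ordSK => -[q|q]; [left|right].
  by rewrite -q mulrC divfK.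
by rewrite -[RHS]mul1r -q mulrAC divfK.
Qed.

Lemma regular_converse N (g : C) (x : 'I_N -> C) :
  (0 < N)%N -> g != 1 -> g != 2 ->
  regular g x -> real_seq x -> nonconstant x ->
  exists (n : nat) (a : nat -> nat) (y : C) (e : 'I_N -> nat)
         (l m : C) (r : 'I_N -> 'I_N),
    (forall k, (k <= n)%N -> (0 < a k)%N) /\
    N = (2 * \sum_(k < n.+1) a k)%N /\
    y \is Num.real /\ root (pX1A C n a) y /\
    incr_ok C n a e /\ g = gamma_of y /\
    l != 0 /\ rotation r /\
    (forall k, l * x (r k) + m = cons_seq y e 0 k).
Proof.
case: N x => [|N] x // _ g1 g2 reg xreal xnc.
have [y [yreal chy dnz step]] := regular_ratios g1 g2 reg xreal xnc.
have [y0 y2 gy] := char_eq_props g1 g2 chy.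
have [l [e [l0 ld eadj e0]]] := geometric_exponents yreal y0 y2 dnz step.
have [n [a [apos Na eok]]] := walk_admissible C eadj e0.
have sum0 : \sum_(i < N.+1) y ^+ e i = 0.
  rewrite -(eq_bigr _ (fun i _ => ld i)) -mulr_sumr /incr sumrB.
  by rewrite [X in _ - X](reindex_inj (@ordS_inj _)) subrr mulr0.
exists n, a, y, e, l, (- (l * x ord0)), id.
do 3 (split; first by []); split; first by apply/rootP; rewrite -(sum_pow_incr y eok).
do 4 (split; first by []).
apply: (@eq_from_incr _ _ _ _ ord0) => [|k].
  by rewrite subrr /cons_seq big_pred0 ?addr0.
by rewrite cons_seq_incr // -ld /incr; ring.
Qed.
End Converse.

Theorem theorem3p1 (C : numClosedFieldType) :
  (* construction *)
  (forall (n : nat) (a : nat -> nat) (y : C),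
     (forall k, (k <= n)%N -> (0 < a k)%N) ->
     y \is Num.real -> root (pX1A C n a) y ->
     let N := (2 * \sum_(k < n.+1) a k)%N in
     (exists e : 'I_N -> nat, incr_ok C n a e) /\
     (forall (e : 'I_N -> nat) (x0 : C), incr_ok C n a e ->
        cons_last y e x0 = x0 /\
        regular (gamma_of y) (cons_seq y e x0) /\
        real_seq (cons_seq y e x0))) /\
  (* converse, gamma <> 1, 2 *)
  (forall (N : nat) (gamma : C) (x : 'I_N -> C),
     (3 <= N)%N -> gamma \is Num.real -> gamma != 1 -> gamma != 2 ->
     regular gamma x -> real_seq x -> nonconstant x ->
     exists (n : nat) (a : nat -> nat) (y : C) (e : 'I_N -> nat)
            (l m : C) (r : 'I_N -> 'I_N),
       (forall k, (k <= n)%N -> (0 < a k)%N) /\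
       N = (2 * \sum_(k < n.+1) a k)%N /\
       y \is Num.real /\ root (pX1A C n a) y /\
       incr_ok C n a e /\ gamma = gamma_of y /\
       l != 0 /\ rotation r /\
       (forall k, l * x (r k) + m = cons_seq y e 0 k)) /\
  (* gamma = 2 *)
  (forall (N : nat) (x : 'I_N -> C), (3 <= N)%N ->
     regular 2 x <->
     exists c : pred 'I_N,
       (forall k, c k -> ~~ c (ordS k)) /\
       (forall k, ~~ c (ordS k) -> x (ordS k) = x k)) /\
  (* gamma = 1 *)
  (forall (N : nat) (x : 'I_N -> C), (3 <= N)%N ->
     (regular 1 x /\ real_seq x /\ nonconstant x) <->
     (~~ odd N /\ exists l m : C, l != 0 /\
        forall k : 'I_N, l * x k + m = (odd k)%:R)).
Proof.
split.
  move=> n a y apos yreal py N; split; first exact: exists_incr_ok.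
  by move=> e x0 eok; have [] := construction_regular x0 apos yreal py eok.
split; first by move=> N g x hN _; apply: regular_converse; apply: leq_trans hN.
split; first by move=> N x _; apply: regular2P.
by move=> N x hN; apply/regular1_realP/ltnW.
Qed.
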